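(* Let $(\mathbf x,\mathbf p,\mu)$ be a deterministic TFM satisfying weak UIC and $2$-weak-SCP. Then for every bid vector $\mathbf b$ and users $i,j$ with $x_i(\mathbf b)=1$ and $x_j(\mathbf b)=0$, we have $b_i\ge b_j$. In other words, the confirmed bids are the $k$ highest bids for some $k$ that may depend on $\mathbf b$.
   Context: Setting (TFM). Each user $i$ has a true value $v_i\ge0$ and submits a single bid $b_i\ge0$; $\mathbf b=(b_1,\dots,b_m)$, $\mathbf b_{-i}$ the other bids. A TFM has an inclusion rule (run by the miner, choosing at most $B$ bids) and confirmation, payment, miner-revenue rules (run by the blockchain on included bids); the mechanism treats users symmetrically (swapping two users' positions and bids swaps their outcomes). Composing the honest inclusion rule with the others gives deterministic $(\mathbf x,\mathbf p,\mu)$: $x_i(\mathbf b)\in\{0,1\}$ indicates confirmation, $p_i(\mathbf b)\le b_i$ the payment ($0$ if unconfirmed), $\mu(\mathbf b)$ the miner revenue. Strategic players (a user, the miner, or the miner with some users) may bid untruthfully after seeing all bids, inject fake bids (true value $0$), and (if the miner is involved) include any at most $B$ available bids in any positions. Weak ($1$-strict) utility: miner revenue (if the miner is in the player) plus $v-p$ for each confirmed transaction of the player (true value $v$, payment $p$), minus $(b-v)$ for each unconfirmed transaction of the player with bid $b>v$. Weak UIC: with an honest miner, each user's weak utility is maximized by truthful bidding without fake bids, whatever the other bids. $c$-weak-SCP: for every coalition of the miner with between $1$ and $c$ users, joint weak utility is maximized by truthful bidding and honest miner behavior, whatever the other bids. *)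

From mathcomp Require Import all_boot all_order all_algebra.
Set Implicit Arguments. Unset Strict Implicit. Unset Printing Implicit Defensive.
Import Order.TTheory GRing.Theory Num.Theory.
Local Open Scope ring_scope.

Section TFMDefs.
Variable R : realFieldType.

(* A bid vector is a [seq R]; user k is the entry at position k.
   A TFM consists of
   - [incl]  : the (honest) inclusion rule run by the miner: given the bid
               vector, the list of indices of included bids, in block order;
   - [conf], [pay], [rev] : the blockchain's confirmation, payment and
               miner-revenue rules, run on the block (the sequence of
               included bids); [conf blk q] / [pay blk q] concern the bid
               at position [q] of the block. *)
Record TFM := MkTFM {
  incl : seq R -> seq nat;
  conf : seq R -> nat -> bool;
  pay  : seq R -> nat -> R;
  rev  : seq R -> R }.

Definition nonneg (b : seq R) : bool := all (fun r => 0 <= r) b.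

Definition valid_incl (M : TFM) (B : nat) : Prop :=
  forall b : seq R, nonneg b ->
    [/\ uniq (incl M b), all (fun k => (k < size b)%N) (incl M b)
      & (size (incl M b) <= B)%N].

Definition blockof (d : seq R) (L : seq nat) : seq R := map (nth 0 d) L.

Definition outx (M : TFM) (d : seq R) (L : seq nat) (k : nat) : bool :=
  (k \in L) && conf M (blockof d L) (index k L).

Definition outp (M : TFM) (d : seq R) (L : seq nat) (k : nat) : R :=
  if outx M d L k then pay M (blockof d L) (index k L) else 0.

Definition outmu (M : TFM) (d : seq R) (L : seq nat) : R :=
  rev M (blockof d L).

Definition xc (M : TFM) (b : seq R) (k : nat) : bool := outx M b (incl M b) k.
Definition pc (M : TFM) (b : seq R) (k : nat) : R := outp M b (incl M b) k.
Definition muc (M : TFM) (b : seq R) : R := outmu M b (incl M b).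

(* Weak (1-strict) utility contribution of one transaction with true value
   [v], bid [bid], confirmation [c], payment [p]. *)
Definition contrib (v bid : R) (c : bool) (p : R) : R :=
  if c then v - p else if v < bid then - (bid - v) else 0.

(* Total weak utility of the transactions [owned] (pairs (index into d,
   true value)) when the block is given by indices [L] into [d]. *)
Definition util (M : TFM) (d : seq R) (L : seq nat) (owned : seq (nat * R)) : R :=
  \sum_(o <- owned) contrib o.2 (nth 0 d o.1) (outx M d L o.1) (outp M d L o.1).

(* Fake bids [f] appended after the [n] real bids, all with true value 0. *)
Definition fakes_owned (n : nat) (f : seq R) : seq (nat * R) :=
  [seq ((n + k)%N, 0) | k <- iota 0 (size f)].

Definition swapn (i j k : nat) : nat :=
  if k == i then j else if k == j then i else k.

Definition symmetric_tfm (M : TFM) : Prop :=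
  forall (b : seq R) (i j : nat), nonneg b -> (i < size b)%N -> (j < size b)%N ->
    let b' := [seq nth 0 b (swapn i j k) | k <- iota 0 (size b)] in
    [/\ forall k, (k < size b)%N -> xc M b' k = xc M b (swapn i j k),
        forall k, (k < size b)%N -> pc M b' k = pc M b (swapn i j k)
      & muc M b' = muc M b].

Definition pay_le_bid (M : TFM) : Prop :=
  forall (b : seq R) (k : nat), nonneg b -> xc M b k -> pc M b k <= nth 0 b k.

(* Weak UIC: honest miner; user i (true value = its entry in b) can change its
   bid to b' and inject fake bids f. *)
Definition weak_UIC (M : TFM) : Prop :=
  forall (b : seq R) (i : nat) (b' : R) (f : seq R),
    nonneg b -> (i < size b)%N -> 0 <= b' -> nonneg f ->
    let d := set_nth 0 b i b' ++ f in
    util M d (incl M d) ((i, nth 0 b i) :: fakes_owned (size b) f)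
      <= util M b (incl M b) [:: (i, nth 0 b i)].

(* c-weak-SCP: miner together with 1..c users S (true values = their entries
   in b); the users change their bids to b', fake bids f are injected, and the
   miner includes any list L of at most B distinct available bids, in any
   order. *)
Definition weak_SCP (M : TFM) (B c : nat) : Prop :=
  forall (b : seq R) (S : seq nat) (b' : nat -> R) (f : seq R) (L : seq nat),
    nonneg b -> uniq S -> all (fun s => (s < size b)%N) S ->
    (1 <= size S <= c)%N ->
    (forall s, s \in S -> 0 <= b' s) -> nonneg f ->
    let d := [seq (if k \in S then b' k else nth 0 b k) | k <- iota 0 (size b)] ++ f in
    uniq L -> all (fun k => (k < size d)%N) L -> (size L <= B)%N ->
    outmu M d L + util M d L ([seq (s, nth 0 b s) | s <- S] ++ fakes_owned (size b) f)
      <= muc M b + util M b (incl M b) [seq (s, nth 0 b s) | s <- S].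

End TFMDefs.

(* Suppose user i is confirmed in b, user j is not, and b_i < b_j; let e be b
   with i's bid raised to b_j.  Two 2-weak-SCP deviations compare b and e:
   - in b, the miner with {i, j} can raise i's bid to b_j and then act
     honestly in e;
   - in e, the miner with {j} can lower j's bid to b_i, which gives b with i
     and j swapped; including the swapped honest block of b hands j the
     outcome that i had in b (confirmation at price p_i(b)).
   Adding the two inequalities cancels the miner revenues and j's utility in
   e, and shows that i's utility in e, measured with true value b_j, is at
   most 0.  But by weak UIC it is at least b_j - p_i(b) >= b_j - b_i > 0,
   since i could bid b_i instead. *)

From mathcomp Require Import all_boot all_order all_algebra.
From mathcomp Require Import lra.
Set Implicit Arguments. Unset Strict Implicit. Unset Printing Implicit Defensive.
Import Order.TTheory GRing.Theory Num.Theory.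
Local Open Scope ring_scope.

Lemma swapnK i j : involutive (swapn i j).
Proof.
move=> k; rewrite /swapn.
case: (k =P i) => [->|/eqP/negPf ki]; first by rewrite eqxx; case: (j =P i).
by case: (k =P j) => [->|/eqP/negPf kj]; rewrite ?eqxx ?ki ?kj.
Qed.

Lemma swapn_lt i j n k :
  (i < n)%N -> (j < n)%N -> (k < n)%N -> (swapn i j k < n)%N.
Proof. by rewrite /swapn; case: ifP => _ //; case: ifP. Qed.

Lemma set_nth_id (T : Type) (x0 : T) (s : seq T) i :
  (i < size s)%N -> set_nth x0 s i (nth x0 s i) = s.
Proof.
move=> hi; apply: (eq_from_nth (x0 := x0)) => [|k _].
  by rewrite size_set_nth; apply/maxn_idPr.
by rewrite nth_set_nth /=; case: eqP => [->|].
Qed.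

Section Utility.
Variable R : realFieldType.

Lemma nonneg_nth (b : seq R) k : nonneg b -> 0 <= nth 0 b k.
Proof.
move=> /allP hb; case: (ltnP k (size b)) => hk; last by rewrite nth_default.
by apply: hb; rewrite mem_nth.
Qed.

Lemma nonneg_set_nth (b : seq R) i r :
  nonneg b -> 0 <= r -> nonneg (set_nth 0 b i r).
Proof.
move=> hb hr; apply/allP => _ /(nthP 0) [k _ <-].
by rewrite nth_set_nth /=; case: ifP => _ //; exact: nonneg_nth.
Qed.

Lemma contrib_confirmed (v bid p : R) : contrib v bid true p = v - p.
Proof. by []. Qed.

Lemma contrib_unconfirmed_truthful (v p : R) : contrib v v false p = 0.
Proof. by rewrite /contrib ltxx. Qed.

Lemma contrib_overbid (v bid p : R) c :
  v <= bid -> contrib v bid c p = contrib bid bid c p - (bid - v).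
Proof.
rewrite /contrib ltxx => hv; case: c; first lra.
by case: ltP => [_|hbv]; lra.
Qed.

Variable M : TFM R.

Lemma util_nil d L : util M d L [::] = 0.
Proof. by rewrite /util big_nil. Qed.

Lemma util_cons d L o s :
  util M d L (o :: s) =
  contrib o.2 (nth 0 d o.1) (outx M d L o.1) (outp M d L o.1) + util M d L s.
Proof. by rewrite /util big_cons. Qed.

Lemma fakes_owned_nil n : fakes_owned n [::] = [::] :> seq (nat * R).
Proof. by []. Qed.

Section Relabel.
Variables (b s : seq R) (L : seq nat) (f : nat -> nat).
Hypothesis f_inj : injective f.
Hypothesis s_f : {in L, forall k, nth 0 s (f k) = nth 0 b k}.

Lemma blockof_relabel : blockof s (map f L) = blockof b L.
Proof. by rewrite /blockof -map_comp; apply/eq_in_map => k /s_f. Qed.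

Lemma outx_relabel k : outx M s (map f L) (f k) = outx M b L k.
Proof. by rewrite /outx blockof_relabel mem_map // index_map. Qed.

Lemma outp_relabel k : outp M s (map f L) (f k) = outp M b L k.
Proof. by rewrite /outp outx_relabel blockof_relabel index_map. Qed.

Lemma outmu_relabel : outmu M s (map f L) = outmu M b L.
Proof. by rewrite /outmu blockof_relabel. Qed.

End Relabel.

Definition deviate (b : seq R) (S : seq nat) (b' : nat -> R) : seq R :=
  [seq (if k \in S then b' k else nth 0 b k) | k <- iota 0 (size b)].

Lemma deviate_set_nth b S b' k :
  k \in S -> all (fun s => (s < size b)%N) S ->
  {in S, forall s, s != k -> b' s = nth 0 b s} ->
  deviate b S b' = set_nth 0 b k (b' k).
Proof.
move=> kS /allP Sb b'S; have kb := Sb k kS.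
apply: (eq_from_nth (x0 := 0)) => [|m].
  by rewrite size_map size_iota size_set_nth; apply/esym/maxn_idPr.
rewrite size_map size_iota => mb.
rewrite (nth_map 0%N) ?size_iota // nth_iota // add0n nth_set_nth /=.
case: (m =P k) => [->|/eqP mk]; first by rewrite kS.
by case: ifP => // mS; apply: b'S.
Qed.

Lemma weak_UIC_no_fakes b i r :
  weak_UIC M -> nonneg b -> (i < size b)%N -> 0 <= r ->
  let d := set_nth 0 b i r in
  util M d (incl M d) [:: (i, nth 0 b i)] <= util M b (incl M b) [:: (i, nth 0 b i)].
Proof. by move=> UIC hb hi hr; have := UIC b i r [::] hb hi hr isT; rewrite cats0. Qed.

Lemma weak_SCP_no_fakes B c b S b' L :
  weak_SCP M B c -> nonneg b -> uniq S -> all (fun s => (s < size b)%N) S ->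
  (1 <= size S <= c)%N -> {in S, forall s, 0 <= b' s} ->
  uniq L -> all (fun k => (k < size b)%N) L -> (size L <= B)%N ->
  let d := deviate b S b' in
  let owned := [seq (s, nth 0 b s) | s <- S] in
  outmu M d L + util M d L owned <= muc M b + util M b (incl M b) owned.
Proof.
move=> SCP hb uS Sb cS b'S uL Lb LB.
have := SCP b S b' [::] L hb uS Sb cS b'S isT.
by rewrite /= cats0 size_map size_iota fakes_owned_nil cats0; apply.
Qed.

End Utility.

Section RaiseLoserBid.
Variables (R : realFieldType) (B c : nat) (M : TFM R) (b : seq R) (i j : nat).
Hypotheses (b_nonneg : nonneg b) (i_lt : (i < size b)%N) (j_lt : (j < size b)%N).
Hypothesis neq_ij : i != j.

Let e := set_nth 0 b i (nth 0 b j).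

Let size_e : size e = size b.
Proof. by rewrite size_set_nth; apply/maxn_idPr. Qed.

Let nth_e k : nth 0 e k = if k == i then nth 0 b j else nth 0 b k.
Proof. by rewrite nth_set_nth. Qed.

Let e_nonneg : nonneg e.
Proof. by apply: nonneg_set_nth => //; exact: nonneg_nth. Qed.

Lemma weak_UIC_raise_bid :
  weak_UIC M -> xc M b i ->
  nth 0 b j - pc M b i <= contrib (nth 0 b j) (nth 0 b j) (xc M e i) (pc M e i).
Proof.
move=> UIC xbi.
have := weak_UIC_no_fakes (i := i) UIC e_nonneg _ (nonneg_nth i b_nonneg).
rewrite size_e => /(_ i_lt) /=.
rewrite set_set_nth eqxx set_nth_id // !util_cons !util_nil !addr0 /= nth_e eqxx.
by rewrite -/(xc M b i) -/(pc M b i) xbi.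
Qed.

Lemma weak_SCP_pair_raise_bid :
  weak_SCP M B c -> (2 <= c)%N -> valid_incl M B ->
  muc M e + contrib (nth 0 b i) (nth 0 b j) (xc M e i) (pc M e i)
          + contrib (nth 0 b j) (nth 0 b j) (xc M e j) (pc M e j)
  <= muc M b + contrib (nth 0 b i) (nth 0 b i) (xc M b i) (pc M b i)
             + contrib (nth 0 b j) (nth 0 b j) (xc M b j) (pc M b j).
Proof.
move=> SCP c2 valid; have [uL Le LB] := valid e e_nonneg; rewrite size_e in Le.
have uS : uniq [:: i; j] by rewrite /= inE neq_ij.
have Sb : all (fun s => (s < size b)%N) [:: i; j] by rewrite /= i_lt j_lt.
have := weak_SCP_no_fakes (b' := fun=> nth 0 b j) SCP b_nonneg uS Sb c2
  (fun _ _ => nonneg_nth j b_nonneg) uL Le LB => /=.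
rewrite (deviate_set_nth (k := i)) ?mem_head //; last first.
  by move=> s; rewrite !inE => /predU1P [->|/eqP->]; rewrite ?eqxx.
rewrite -/e !util_cons !util_nil !addr0 /= !nth_e eqxx eq_sym (negPf neq_ij).
by rewrite !addrA.
Qed.

Lemma weak_SCP_lower_raised_bid :
  weak_SCP M B c -> (1 <= c)%N -> valid_incl M B ->
  muc M b + contrib (nth 0 b j) (nth 0 b i) (xc M b i) (pc M b i)
  <= muc M e + contrib (nth 0 b j) (nth 0 b j) (xc M e j) (pc M e j).
Proof.
move=> SCP c1 valid; have [uL Lb LB] := valid b b_nonneg.
set d := deviate e [:: j] (fun=> nth 0 b i).
have d_swap k : nth 0 d (swapn i j k) = nth 0 b k.
  rewrite /d (deviate_set_nth (k := j)) ?mem_head /= ?size_e ?j_lt //; last first.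
    by move=> s; rewrite inE => /eqP->; rewrite eqxx.
  rewrite nth_set_nth /= nth_e /swapn.
  have [->|ki] := eqVneq k i; first by rewrite eqxx.
  have [->|kj] := eqVneq k j; last by rewrite (negPf ki) (negPf kj).
  by rewrite (negPf neq_ij) eqxx.
have swap_inj : injective (swapn i j) := can_inj (swapnK i j).
have uL' : uniq (map (swapn i j) (incl M b)) by rewrite map_inj_uniq.
have L'e : all (fun k => (k < size e)%N) (map (swapn i j) (incl M b)).
  by rewrite all_map size_e; apply/allP => m /(allP Lb) mb /=; apply: swapn_lt.
have Se : all (fun s => (s < size e)%N) [:: j] by rewrite /= size_e j_lt.
have := weak_SCP_no_fakes (S := [:: j]) (b' := fun=> nth 0 b i) SCP e_nonneg
  isT Se c1 (fun _ _ => nonneg_nth i b_nonneg) uL' L'e.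
rewrite size_map => /(_ LB) /=; rewrite -/d.
have d_b : {in incl M b, forall k, nth 0 d (swapn i j k) = nth 0 b k} by move=> k _.
have swap_i : swapn i j i = j by rewrite /swapn eqxx.
have := outx_relabel M swap_inj d_b i; have := outp_relabel M swap_inj d_b i.
rewrite swap_i => xd pd; rewrite !util_cons !util_nil !addr0 /= xd pd.
have d_j : nth 0 d j = nth 0 b i by rewrite -swap_i d_swap.
by rewrite (outmu_relabel M d_b) d_j nth_e (eq_sym j i) (negPf neq_ij).
Qed.

End RaiseLoserBid.

Theorem mainTheorem15 (R : realFieldType) (B : nat) (M : TFM R) :
  valid_incl M B -> symmetric_tfm M -> pay_le_bid M ->
  weak_UIC M -> weak_SCP M B 2 ->
  forall (b : seq R) (i j : nat), nonneg b ->
    (i < size b)%N -> (j < size b)%N ->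
    xc M b i = true -> xc M b j = false ->
    nth 0 b j <= nth 0 b i.
Proof.
move=> valid _ pay_le UIC SCP b i j b0 i_lt j_lt xbi xbj.
rewrite leNgt; apply/negP => lt_ij.
have neq_ij : i != j by apply: contraTneq xbi => ->; rewrite xbj.
have := pay_le b i b0 xbi.
have := weak_UIC_raise_bid j b0 i_lt UIC xbi.
have := weak_SCP_pair_raise_bid b0 i_lt j_lt neq_ij SCP isT valid.
have := weak_SCP_lower_raised_bid b0 i_lt j_lt neq_ij SCP isT valid.
rewrite (contrib_overbid _ _ (ltW lt_ij)) xbi xbj.
rewrite !contrib_confirmed contrib_unconfirmed_truthful.
lra.
Qed.
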